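(* Let $q\ge 4$ be a power of $2$. Then there exist a linear AOA$(1,q-1,q+2,q)$ and a linear AOA$(3,q-1,q+2,q)$.
   Context: An orthogonal array OA$(t,k,v)$ (with $1\le t\le k$) is a $v^t\times k$ array with entries from a set $X$ of size $v$ such that, for every choice of $t$ of its columns, each $t$-tuple in $X^t$ appears exactly once as a row of the corresponding $v^t\times t$ subarray. For integers $1\le s\le t\le k$, an augmented orthogonal array AOA$(s,t,k,v)$ is a $v^t\times(k+1)$ array $A$ such that: (1) the first $k$ columns of $A$ form an OA$(t,k,v)$ on a symbol set $X$ of size $v$; (2) the last column of $A$ has entries from a set $Y$ of size $v^{t-s}$; (3) for any choice of $s$ of the first $k$ columns, these $s$ columns together with the last column contain every $(s+1)$-tuple of $X^s\times Y$ exactly once as a row. For a prime power $q$, an AOA$(s,t,k,q)$ is linear if $X=\mathbb{F}_q$, $Y=\mathbb{F}_q^{t-s}$, and its set of rows, regarded as vectors in $\mathbb{F}_q^{k}\times\mathbb{F}_q^{t-s}=\mathbb{F}_q^{k+t-s}$, is an $\mathbb{F}_q$-linear subspace. (When $q=4$, the second array is an AOA$(3,3,6,4)$, i.e. the case $s=t$.) *)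

From HB Require Import structures.
From mathcomp Require Import all_boot all_order all_algebra all_field.
Set Implicit Arguments. Unset Strict Implicit. Unset Printing Implicit Defensive.
Import GRing.Theory.
Local Open Scope ring_scope.

(* An array with N rows whose first k columns have entries in X and whose
   last column has entries in Y: row i is (A i).1 (entries of columns
   0..k-1) together with (A i).2 (entry of the last column). *)
Definition aoa_array (X Y : finType) (N k : nat) :=
  'I_N -> {ffun 'I_k -> X} * Y.

(* Augmented orthogonal array AOA(s,t,k,v) with v = #|X|, on symbol sets
   X (size v) and Y, with v^t rows.
   "for every choice of t columns, every t-tuple appears exactly once"
   is stated as: for every injective selection c of t columns, the map
   row |-> (entries of the row at columns c) is a bijection onto X^t. *)
Definition is_AOA (X Y : finType) (s t k : nat)
    (A : aoa_array X Y (#|X| ^ t) k) : Prop :=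
  [/\ (1 <= s <= t)%N, (t <= k)%N,
      #|Y| = (#|X| ^ (t - s))%N,
      (forall c : 'I_t -> 'I_k, injective c ->
         bijective (fun i => [ffun j => (A i).1 (c j)]))
    & (forall c : 'I_s -> 'I_k, injective c ->
         bijective (fun i => ([ffun j => (A i).1 (c j)], (A i).2)))].

Definition aoa_row (F : finFieldType) (N k r : nat)
    (A : aoa_array F 'rV[F]_r N k) (i : 'I_N) : 'rV[F]_(k + r) :=
  row_mx (\row_j (A i).1 j) (A i).2.

Definition aoa_rows (F : finFieldType) (N k r : nat)
    (A : aoa_array F 'rV[F]_r N k) : {set 'rV[F]_(k + r)} :=
  [set aoa_row A i | i : 'I_N].

Definition is_linear_AOA (F : finFieldType) (s t k : nat)
    (A : aoa_array F 'rV[F]_(t - s) (#|F| ^ t) k) : Prop :=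
  @is_AOA F _ s t k A /\
  (0 \in aoa_rows A /\
   forall (a : F) (u v : 'rV[F]_(k + (t - s))),
     u \in aoa_rows A -> v \in aoa_rows A -> a *: u + v \in aoa_rows A).
Arguments is_linear_AOA {F} s t k A.

(* The q + 2 points of a hyperoval (a conic and its nucleus, q even) are such
   that any three are linearly independent, so the words orthogonal to them
   form an MDS code C of length q + 2 and dimension q - 1: a word of C that
   vanishes at q - 1 coordinates is zero.  The words of C are the rows of a
   linear OA(q-1, q+2, q).  To augment it, fix a subcode K of C of dimension s
   in which any s coordinates determine the word, and s nonzero points P of
   the conic.  Each c in C agrees on P with a unique k in K, and the last
   column records c - k on the other q - 1 - s nonzero conic points.  If c
   vanishes on s given columns and in the last column, then c - k is a word
   of C vanishing on all nonzero conic points, so c = k; then k vanishes on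
   s coordinates, so k = 0.  For s = 3, K is the hyperoval code with the
   conic reparametrised by x |-> 1/x; for s = 1, K is spanned by a word of it
   without zero coordinates, which exists because u |-> u^2 + u is not onto. *)

From mathcomp Require Import all_boot all_order all_algebra all_field.
From mathcomp Require Import fingroup cyclic ring zify.

Set Implicit Arguments. Unset Strict Implicit. Unset Printing Implicit Defensive.
Import GRing.Theory FinRing.Theory.
Local Open Scope ring_scope.

Section FinFieldSums.
Variable F : finFieldType.

Lemma natr_card_finField : #|F|%:R = 0 :> F.
Proof. by rewrite -zmodXgE -cardsT expg_cardG ?inE. Qed.

Lemma exists_neq01 : (2 < #|F|)%N -> exists a : F, (a != 0) && (a != 1).
Proof.
move=> F3; apply/existsP; apply: contraLR F3; rewrite negb_exists => /forallP F01.
rewrite -leqNgt; apply: (@leq_trans #|[set (0 : F); 1]|).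
  by apply/subset_leq_card/subsetP=> a _; move: (F01 a); rewrite !inE negb_and !negbK.
by rewrite cards2 eq_sym oner_eq0.
Qed.

Lemma sumr_finField : (2 < #|F|)%N -> \sum_(x : F) x = 0.
Proof.
move=> /exists_neq01[a /andP[a0 a1]].
have : \sum_(x : F) x = a * \sum_(x : F) x.
  by rewrite {1}(reindex_inj (mulfI a0)) mulr_sumr.
move/eqP; rewrite -subr_eq0 -{1}[\sum_x x]mul1r -mulrBl mulf_eq0 subr_eq0.
by rewrite eq_sym (negbTE a1) => /eqP.
Qed.

Lemma sumr_invf (f : F -> F) : \sum_(x : F) f x^-1 = \sum_(x : F) f x.
Proof. by rewrite (reindex_inj (@invr_inj F)); apply: eq_bigr => x _; rewrite invrK. Qed.

Lemma sumr_mulVf : \sum_(x : F) x^-1 * x = -1.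
Proof.
rewrite (bigD1 0) //= mulr0 add0r (eq_bigr (fun=> 1)) => [|x /mulVf //].
rewrite sumr_const cardC1 -subn1 natrB ?(ltnW (card_finNzRing_gt1 F)) //.
by rewrite natr_card_finField sub0r.
Qed.

Lemma mulVf_sqr (x : F) : x^-1 * x ^+ 2 = x.
Proof.
by have [->|x0] := eqVneq x 0; rewrite ?invr0 ?mul0r // expr2 mulKf.
Qed.

Hypothesis F2 : 2 \in [pchar F].

Lemma sumr_sqr_finField : (2 < #|F|)%N -> \sum_(x : F) x ^+ 2 = 0.
Proof.
move=> F3; under eq_bigr do rewrite -(pFrobenius_autE F2).
by rewrite -rmorph_sum sumr_finField // rmorph0.
Qed.

End FinFieldSums.

Section Det3.
Variable R : idomainType.

Definition det3 (u0 u1 u2 v0 v1 v2 w0 w1 w2 : R) :=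
  u0 * (v1 * w2 - v2 * w1) - u1 * (v0 * w2 - v2 * w0) + u2 * (v0 * w1 - v1 * w0).

Lemma det3_tr u0 u1 u2 v0 v1 v2 w0 w1 w2 :
  det3 u0 u1 u2 v0 v1 v2 w0 w1 w2 = det3 u0 v0 w0 u1 v1 w1 u2 v2 w2.
Proof. by rewrite /det3; ring. Qed.

Lemma det3_kernel u0 u1 u2 v0 v1 v2 w0 w1 w2 a b c :
  det3 u0 u1 u2 v0 v1 v2 w0 w1 w2 != 0 ->
  a * u0 + b * v0 + c * w0 = 0 -> a * u1 + b * v1 + c * w1 = 0 ->
  a * u2 + b * v2 + c * w2 = 0 -> [/\ a = 0, b = 0 & c = 0].
Proof.
set d := det3 _ _ _ _ _ _ _ _ _ => d_neq0 e0 e1 e2.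
(* Cramer: each coefficient times [d] is a determinant with a zero row. *)
have da : a * d = det3 (a * u0 + b * v0 + c * w0) (a * u1 + b * v1 + c * w1)
    (a * u2 + b * v2 + c * w2) v0 v1 v2 w0 w1 w2 by rewrite /d /det3; ring.
have db : b * d = det3 u0 u1 u2 (a * u0 + b * v0 + c * w0)
    (a * u1 + b * v1 + c * w1) (a * u2 + b * v2 + c * w2) w0 w1 w2.
  by rewrite /d /det3; ring.
have dc : c * d = det3 u0 u1 u2 v0 v1 v2 (a * u0 + b * v0 + c * w0)
    (a * u1 + b * v1 + c * w1) (a * u2 + b * v2 + c * w2) by rewrite /d /det3; ring.
rewrite e0 e1 e2 /det3 in da db dc.
by split; apply/eqP; rewrite -(mulIr_eq0 _ (mulIf d_neq0)) ?da ?db ?dc; apply/eqP; ring.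
Qed.

End Det3.

Section Hyperoval.
Variable F : finFieldType.
Hypothesis F2 : 2 \in [pchar F].

(* [inl x] is the point (1, x, x^2) of the conic, [inr true] its point at
   infinity (0, 0, 1) and [inr false] its nucleus (0, 1, 0). *)
Definition hpoint := (F + bool)%type.

Definition hcoord (r : nat) (j : hpoint) : F :=
  match j with inl x => x ^+ r | inr b => ((if b then 2 else 1) == r)%:R end.

Definition hdet (j1 j2 j3 : hpoint) :=
  det3 (hcoord 0 j1) (hcoord 1 j1) (hcoord 2 j1) (hcoord 0 j2) (hcoord 1 j2)
       (hcoord 2 j2) (hcoord 0 j3) (hcoord 1 j3) (hcoord 2 j3).

Lemma addr_neq0_pchar2 (x y : F) : x != y -> x + y != 0.
Proof. by rewrite -subr_eq0 -{2}[y](oppr_pchar2 F2). Qed.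

Ltac det3_factor c :=
  match goal with |- context [det3 ?u0 ?u1 ?u2 ?v0 ?v1 ?v2 ?w0 ?w1 ?w2] =>
    let d := constr:(det3 u0 u1 u2 v0 v1 v2 w0 w1 w2) in
    first [have -> : d = c by rewrite /det3; ring
          | have -> : d = - c by rewrite /det3; ring]
  end; rewrite ?oppr_eq0.

Lemma hdet_neq0 j1 j2 j3 :
  j1 != j2 -> j1 != j3 -> j2 != j3 -> hdet j1 j2 j3 != 0.
Proof.
(* Up to sign each determinant is a product of factors x - y and x + y,
   which are nonzero for x != y in characteristic 2. *)
rewrite /hdet; case: j1 => [x|[]]; case: j2 => [y|[]]; case: j3 => [z|[]] //=;
  rewrite ?expr0 ?expr1 ?(inj_eq (@inl_inj _ _)) => n12 n13 n23;
  first [ det3_factor ((x - y) * (x - z) * (y - z))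
        | det3_factor ((x - y) * (x + y)) | det3_factor (x - y)
        | det3_factor ((x - z) * (x + z)) | det3_factor (x - z)
        | det3_factor ((y - z) * (y + z)) | det3_factor (y - z)
        | det3_factor (1 : F) ];
  rewrite ?oner_eq0 //; repeat apply: mulf_neq0;
  by rewrite ?subr_eq0 ?addr_neq0_pchar2.
Qed.

Definition hinv (j : hpoint) : hpoint := if j is inl x then inl x^-1 else j.

Lemma hinvK : involutive hinv.
Proof. by case=> //= x; rewrite invrK. Qed.

Definition dual_word (w : hpoint -> F) :=
  forall r, (r < 3)%N -> \sum_j w j * hcoord r j = 0.

Lemma dual_wordB w1 w2 :
  dual_word w1 -> dual_word w2 -> dual_word (fun j => w1 j - w2 j).
Proof.
move=> dw1 dw2 r r3; under eq_bigr do rewrite mulrBl.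
by rewrite sumrB dw1 // dw2 // subrr.
Qed.

Lemma dual_word_comb (I : finType) (l : I -> F) (b : I -> hpoint -> F) :
  (forall i, dual_word (b i)) -> dual_word (fun j => \sum_i l i * b i j).
Proof.
move=> db r r3; under eq_bigr do rewrite mulr_suml.
rewrite exchange_big big1 // => i _; under eq_bigr do rewrite -mulrA.
by rewrite -mulr_sumr db // mulr0.
Qed.

Lemma dual_word_eq0_on3 w j1 j2 j3 :
  j1 != j2 -> j1 != j3 -> j2 != j3 -> dual_word w ->
  (forall j, j \notin [:: j1; j2; j3] -> w j = 0) -> forall j, w j = 0.
Proof.
move=> n12 n13 n23 dw w0 j.
have uniq_j : uniq [:: j1; j2; j3] by rewrite /= !inE negb_or n12 n13 n23.
have eq_r r : (r < 3)%N ->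
    w j1 * hcoord r j1 + w j2 * hcoord r j2 + w j3 * hcoord r j3 = 0.
  move=> r3; rewrite -(dw r r3) (bigID (mem [:: j1; j2; j3])) /=.
  rewrite [X in _ = _ + X]big1 ?addr0 => [|i /w0 ->]; last by rewrite mul0r.
  by rewrite -big_uniq // !big_cons big_nil /= addr0 addrA.
have [] := det3_kernel (hdet_neq0 n12 n13 n23) (eq_r 0%N isT) (eq_r 1%N isT) (eq_r 2%N isT).
have [/w0 // | ] := boolP (j \notin [:: j1; j2; j3]).
by rewrite negbK !inE => /or3P[] /eqP->.
Qed.

Lemma dual_word_eq0 w (Z : {set hpoint}) : #|Z| = 3%N -> dual_word w ->
  (forall j, j \notin Z -> w j = 0) -> forall j, w j = 0.
Proof.
rewrite cardE => Z3 dw w0; move: Z3 (enum_uniq Z) (mem_enum Z).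
case: (enum Z) => [|j1 [|j2 [|j3 []]]] //= _.
rewrite !inE !negb_or andbT => /andP[/andP[n12 n13] n23] memZ.
by apply: (dual_word_eq0_on3 n12 n13 n23 dw) => j; rewrite memZ; apply: w0.
Qed.

Hypothesis F3 : (2 < #|F|)%N.

Definition hinv_word (r : 'I_3) (j : hpoint) : F := hcoord r (hinv j).

Lemma hinv_word_dual (s : 'I_3) : dual_word (hinv_word s).
Proof.
have sum1 : \sum_(x : F) x = 0 := sumr_finField F3.
have sum2 : \sum_(x : F) x ^+ 2 = 0 := sumr_sqr_finField F2 F3.
have sumV1 : \sum_(x : F) x^-1 = 0 by rewrite (sumr_invf id).
have sumV2 : \sum_(x : F) x^-1 ^+ 2 = 0 by rewrite (sumr_invf (fun x => x ^+ 2)).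
have sqrVM (x : F) : x^-1 ^+ 2 * x = x^-1 by rewrite mulrC -{1}[x]invrK mulVf_sqr.
have sqrVMsqr (x : F) : x^-1 ^+ 2 * x ^+ 2 = x^-1 * x.
  by rewrite -exprMn; have [->|/mulVf->] := eqVneq x 0; rewrite ?mulr0 ?expr0n ?expr1n.
(* On the conic these are power sums; for r = s > 0 the term at x = 0
   vanishes (0^-1 = 0) and the point off the conic makes up for it. *)
move=> r r3; rewrite big_sumType big_bool /hinv_word /=.
case: s => [[|[|[|]]] s3] //; case: r r3 => [|[|[|]]] // _ /=;
  under eq_bigr do rewrite ?expr0 ?expr1 ?mulr1 ?mul1r ?mulVf_sqr ?sqrVM ?sqrVMsqr;
  by rewrite ?mulr0 ?mulr1 ?addr0 ?add0r ?sumr_mulVf ?addNr ?sumr_const ?natr_card_finField.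
Qed.

Local Notation word := {ffun {x in predC1 (0 : F)} -> F^o}.

(* Systematic encoding of C: the free coordinates sit on the nonzero conic
   points and the coordinate at [inl 0] is their sum, so that in
   characteristic 2 the coordinates on the conic add up to 0; the two points
   off the conic are then solved from the two remaining parity checks. *)
Definition conic_coord (e : word) (x : F) : F :=
  if insub x is Some y then e y else \sum_y e y.

Definition encode (e : word) (j : hpoint) : F :=
  match j with
  | inl x => conic_coord e x
  | inr b => \sum_x conic_coord e x * x ^+ (if b then 2 else 1)
  end.

Lemma conic_coord_val e (y : {x in predC1 (0 : F)}) : conic_coord e (val y) = e y.
Proof. by rewrite /conic_coord valK. Qed.

Lemma encode_eq0 e : (forall j, encode e j = 0) -> e = 0.
Proof. by move=> e0; apply/ffunP => y; rewrite ffunE -conic_coord_val; exact: e0 (inl _). Qed.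

Lemma conic_coord_lin a e1 e2 x :
  conic_coord (a *: e1 + e2) x = a * conic_coord e1 x + conic_coord e2 x.
Proof.
rewrite /conic_coord; case: insubP => [y _ _|_]; first by rewrite !ffunE.
by under eq_bigr do rewrite !ffunE; rewrite big_split mulr_sumr.
Qed.

Lemma encode_lin a e1 e2 j :
  encode (a *: e1 + e2) j = a * encode e1 j + encode e2 j.
Proof.
case: j => [x|b] /=; first exact: conic_coord_lin.
under eq_bigr do rewrite conic_coord_lin mulrDl -mulrA.
by rewrite big_split mulr_sumr.
Qed.

Lemma encodeB e1 e2 j : encode (e1 - e2) j = encode e1 j - encode e2 j.
Proof. by rewrite -[e1 - e2]addrC -scaleN1r encode_lin mulN1r addrC. Qed.

Lemma encode_dual e : dual_word (encode e).
Proof.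
have sum_conic : \sum_x conic_coord e x = 0.
  rewrite (bigD1 0) //= [conic_coord e 0]/conic_coord insubF ?inE ?eqxx //.
  have -> : \sum_(x | x != 0) conic_coord e x = \sum_y e y.
    by rewrite (big_sub (predC1 0)); apply: eq_bigr => y _; exact: conic_coord_val.
  exact: addrr_pchar2.
move=> r; rewrite big_sumType big_bool /=.
case: r => [|[|[|]]] // _ /=; rewrite ?mulr0 ?mulr1 ?addr0.
- by under eq_bigr do rewrite mulr1.
- by rewrite add0r addrr_pchar2.
- by rewrite addrr_pchar2.
Qed.

Section Interpolation.
Variables (s : nat) (b : 'I_s -> hpoint -> F).

Definition comb (l : 'rV[F]_s) (j : hpoint) : F := \sum_i l 0 i * b i j.

Hypothesis b_dual : forall i, dual_word (b i).
Hypothesis comb_eq0 : forall c : 'I_s -> hpoint, injective c ->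
  forall l, (forall k, comb l (c k) = 0) -> l = 0.

Lemma comb_lin a l1 l2 j : comb (a *: l1 + l2) j = a * comb l1 j + comb l2 j.
Proof.
rewrite /comb mulr_sumr -big_split; apply: eq_bigr => i _.
by rewrite !mxE mulrDl mulrA.
Qed.

Variable P : {set F}.
Hypotheses (P0 : 0 \notin P) (Ps : #|P| = s).

Definition P_point (k : 'I_s) : hpoint := inl (enum_val (cast_ord (esym Ps) k)).

Lemma P_point_inj : injective P_point.
Proof. by move=> k1 k2 [] /enum_val_inj /cast_ord_inj. Qed.

Definition restrP (l : 'rV_s) : 'rV_s := \row_k comb l (P_point k).

Lemma restrP_inj : injective restrP.
Proof.
move=> l1 l2 /rowP eq12; apply/eqP; rewrite -subr_eq0; apply/eqP.
apply: (comb_eq0 P_point_inj) => k.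
move: (eq12 k); rewrite !mxE addrC -scaleN1r comb_lin => ->.
by rewrite mulN1r addNr.
Qed.

Definition interp_coef (e : word) : 'rV_s :=
  invF restrP_inj (\row_k encode e (P_point k)).

Definition interp (e : word) : hpoint -> F := comb (interp_coef e).

Lemma interp_P_point e k : interp e (P_point k) = encode e (P_point k).
Proof.
by have /rowP/(_ k) := f_invF restrP_inj (\row_k encode e (P_point k)); rewrite !mxE.
Qed.

Lemma interp_on_P e x : x \in P -> interp e (inl x) = encode e (inl x).
Proof.
move=> xP; have -> : inl x = P_point (cast_ord Ps (enum_rank_in xP x)).
  by rewrite /P_point cast_ordK enum_rankK_in.
exact: interp_P_point.
Qed.

Lemma interp_lin a e1 e2 j :
  interp (a *: e1 + e2) j = a * interp e1 j + interp e2 j.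
Proof.
rewrite /interp -comb_lin; congr comb; apply: restrP_inj.
rewrite f_invF; apply/rowP => k; rewrite !mxE comb_lin encode_lin.
by rewrite -!/(interp _ _) !interp_P_point.
Qed.

Lemma interp_dual e : dual_word (interp e).
Proof. exact: dual_word_comb. Qed.

Lemma interp_eq0 e (c : 'I_s -> hpoint) : injective c ->
  (forall k, interp e (c k) = 0) -> forall j, interp e j = 0.
Proof.
move=> c_inj /(comb_eq0 c_inj) coef0 j.
by rewrite /interp coef0 /comb big1 // => i _; rewrite mxE mul0r.
Qed.

Lemma s_le_card : (s <= #|F| - 1)%N.
Proof.
rewrite -Ps subn1 -(cardC1 (0 : F)); apply/subset_leq_card/subsetP => x xP.
by rewrite !inE; apply: contraNneq P0 => <-.
Qed.

Definition D : {set F} := ~: (0 |: P).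

Lemma card_D : #|D| = (#|F| - 1 - s)%N.
Proof. by rewrite cardsCs setCK cardsU1 P0 Ps subnDA. Qed.

Definition D_point (i : 'I_(#|F| - 1 - s)) : F := enum_val (cast_ord (esym card_D) i).

Definition deviation (e : word) : 'rV[F]_(#|F| - 1 - s) :=
  \row_i (encode e (inl (D_point i)) - interp e (inl (D_point i))).

Lemma deviation_lin a e1 e2 :
  deviation (a *: e1 + e2) = a *: deviation e1 + deviation e2.
Proof. by apply/rowP => i; rewrite !mxE encode_lin interp_lin; ring. Qed.

Lemma deviationB e1 e2 : deviation (e1 - e2) = deviation e1 - deviation e2.
Proof. by rewrite -[e1 - e2]addrC -scaleN1r deviation_lin scaleN1r addrC. Qed.

Lemma encode_eq_interp e : deviation e = 0 -> forall j, encode e j = interp e j.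
Proof.
move=> dev0 j; apply/eqP; rewrite -subr_eq0; apply/eqP; move: j.
apply: (@dual_word_eq0_on3 _ (inl 0) (inr false) (inr true)) => //.
  exact/dual_wordB/interp_dual/encode_dual.
case=> [x|[]]; rewrite !inE //= => /norP[x0 _].
have [xP|xPn] := boolP (x \in P); first by rewrite interp_on_P // subrr.
have xD : x \in D by rewrite !inE negb_or x0.
have /rowP/(_ (cast_ord card_D (enum_rank_in xD x))) := dev0.
by rewrite !mxE /D_point cast_ordK enum_rankK_in.
Qed.

Lemma card_hpoint : #|{: hpoint}| = (#|F| + 2)%N.
Proof. by rewrite card_sum card_bool. Qed.

Definition column (j : 'I_(#|F| + 2)) : hpoint :=
  enum_val (cast_ord (esym card_hpoint) j).

Lemma column_inj : injective column.
Proof. by move=> j1 j2 /enum_val_inj /cast_ord_inj. Qed.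

Lemma card_word : #|{: word}| = (#|F| ^ (#|F| - 1))%N.
Proof. by rewrite card_ffun card_sig cardC1 subn1. Qed.

Definition row_word (i : 'I_(#|F| ^ (#|F| - 1))) : word :=
  enum_val (cast_ord (esym card_word) i).

Lemma row_word_inj : injective row_word.
Proof. by move=> i1 i2 /enum_val_inj /cast_ord_inj. Qed.

Lemma row_word_onto e : row_word (cast_ord card_word (enum_rank e)) = e.
Proof. by rewrite /row_word cast_ordK enum_rankK. Qed.

Definition code_aoa : aoa_array F 'rV[F]_(#|F| - 1 - s) (#|F| ^ (#|F| - 1)) (#|F| + 2) :=
  fun i => ([ffun j => encode (row_word i) (column j)], deviation (row_word i)).

Lemma code_aoa_OA (c : 'I_(#|F| - 1) -> 'I_(#|F| + 2)) : injective c ->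
  bijective (fun i => [ffun k => (code_aoa i).1 (c k)]).
Proof.
move=> c_inj; apply: inj_card_bij; last by rewrite card_ffun !card_ord.
move=> i1 i2 /ffunP eq12; apply/row_word_inj/eqP; rewrite -subr_eq0.
apply/eqP/encode_eq0; pose Z := ~: [set column (c k) | k in 'I_(#|F| - 1)].
apply: (@dual_word_eq0 _ Z _ (encode_dual _)).
  rewrite cardsCs setCK card_imset ?card_ord; last exact: inj_comp column_inj c_inj.
  by rewrite card_hpoint; lia.
move=> j; rewrite inE negbK => /imsetP[k _ ->].
by move: (eq12 k); rewrite !ffunE encodeB => ->; rewrite subrr.
Qed.

Lemma code_aoa_AOA (c : 'I_s -> 'I_(#|F| + 2)) : injective c ->
  bijective (fun i => ([ffun k => (code_aoa i).1 (c k)], (code_aoa i).2)).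
Proof.
move=> c_inj; apply: inj_card_bij; last first.
  by rewrite card_prod card_ffun card_mx !card_ord mul1n -expnD subnKC ?s_le_card.
move=> i1 i2 [/ffunP eq12 dev12]; apply/row_word_inj/eqP; rewrite -subr_eq0.
set e := _ - _; apply/eqP/encode_eq0.
have /encode_eq_interp enc_int : deviation e = 0 by rewrite deviationB dev12 subrr.
have int0 := @interp_eq0 e _ (inj_comp column_inj c_inj).
move=> j; rewrite enc_int int0 // => k.
by rewrite -enc_int encodeB; move: (eq12 k); rewrite !ffunE => ->; rewrite subrr.
Qed.

Definition code_row (e : word) : 'rV[F]_(#|F| + 2 + (#|F| - 1 - s)) :=
  row_mx (\row_j encode e (column j)) (deviation e).

Lemma code_row_lin a e1 e2 :
  code_row (a *: e1 + e2) = a *: code_row e1 + code_row e2.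
Proof.
rewrite /code_row scale_row_mx add_row_mx deviation_lin; congr row_mx.
by apply/rowP => j; rewrite !mxE encode_lin.
Qed.

Lemma aoa_row_code i : aoa_row code_aoa i = code_row (row_word i).
Proof. by rewrite /aoa_row /code_row; congr row_mx; apply/rowP => j; rewrite !mxE ffunE. Qed.

Lemma aoa_rows_code : aoa_rows code_aoa = [set code_row e | e : word].
Proof.
apply/setP => v; apply/imsetP/imsetP => [[i _ ->]|[e _ ->]].
  by exists (row_word i); rewrite ?aoa_row_code.
by exists (cast_ord card_word (enum_rank e)); rewrite ?aoa_row_code ?row_word_onto.
Qed.

Lemma code_aoa_linear : (0 < s)%N -> is_linear_AOA s (#|F| - 1) (#|F| + 2) code_aoa.
Proof.
move=> s_gt0; split; first split.
- by rewrite s_gt0 s_le_card.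
- by rewrite leq_subLR addnCA leq_addr.
- by rewrite card_mx mul1n.
- exact: code_aoa_OA.
- exact: code_aoa_AOA.
rewrite aoa_rows_code; split.
  apply/imsetP; exists 0 => //.
  have -> : (0 : word) = (-1) *: 0 + 0 by rewrite scaler0 addr0.
  by rewrite code_row_lin scaleN1r addNr.
move=> a _ _ /imsetP[e1 _ ->] /imsetP[e2 _ ->].
by apply/imsetP; exists (a *: e1 + e2); rewrite ?code_row_lin.
Qed.

End Interpolation.

Lemma hinv_word_comb_eq0 (c : 'I_3 -> hpoint) : injective c ->
  forall l, (forall k, comb hinv_word l (c k) = 0) -> l = 0.
Proof.
move=> c_inj l cl0.
have c_neq k1 k2 : k1 != k2 -> c k1 != c k2 by rewrite (inj_eq c_inj).
have hdet_c : hdet (hinv (c 0)) (hinv (c 1)) (hinv (c 2)) != 0.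
  by apply: hdet_neq0; rewrite (inj_eq (inv_inj hinvK)) c_neq.
rewrite /hdet det3_tr in hdet_c.
move: (cl0 0) (cl0 1) (cl0 2).
rewrite /comb !big_ord_recl !big_ord0 !addr0 !addrA => e0 e1 e2.
have [l0 l1 l2] := det3_kernel hdet_c e0 e1 e2.
apply/rowP => i; rewrite mxE.
case: (unliftP ord0 i) => [i' ->|->] //; case: (unliftP ord0 i') => [i'' ->|->] //.
by rewrite ord1.
Qed.

Lemma linear_AOA3_exists :
  exists A : aoa_array F 'rV[F]_(#|F| - 1 - 3) (#|F| ^ (#|F| - 1)) (#|F| + 2),
    is_linear_AOA 3 (#|F| - 1) (#|F| + 2) A.
Proof.
have [a /andP[a0 a1]] := exists_neq01 F3.
have a1_neq : a + 1 != a by rewrite -subr_eq0 addrAC subrr add0r oner_eq0.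
have P0 : 0 \notin [set 1; a; a + 1].
  by rewrite !inE !negb_or eq_sym oner_eq0 eq_sym a0 eq_sym addr_neq0_pchar2.
have P3 : #|[set (1 : F); a; a + 1]| = 3%N.
  have a11 : (1 == a + 1) = false by rewrite eq_sym -subr_eq0 addrK (negbTE a0).
  by rewrite -setUA cardsU1 cards2 !inE [1 == a]eq_sym (negbTE a1) a11 [a == _]eq_sym a1_neq.
exists (code_aoa hinv_word_comb_eq0 P0 P3).
exact: (code_aoa_linear hinv_word_dual).
Qed.

Lemma exists_not_sqr_add : exists al : F, forall u, u ^+ 2 + u != al.
Proof.
(* u |-> u^2 + u identifies 0 and 1, so it is not onto. *)
pose f (u : F) := u ^+ 2 + u.
suff /existsP[al /forallP f_al] : [exists al, [forall u, f u != al]] by exists al.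
apply: contraT; rewrite negb_exists => /forallP f_onto.
have /image_injP f_inj : #|image f F| == #|F|.
  rewrite eqn_leq leq_image_card; apply/subset_leq_card/subsetP => al _.
  by have /existsP[u /negPn/eqP <-] := f_onto al; apply: image_f.
have := f_inj 0 1 isT isT; rewrite /f expr0n expr1n addr0 addrr_pchar2 //.
by move=> /(_ erefl)/eqP; rewrite eq_sym oner_eq0.
Qed.

Lemma linear_AOA1_exists :
  exists A : aoa_array F 'rV[F]_(#|F| - 1 - 1) (#|F| ^ (#|F| - 1)) (#|F| + 2),
    is_linear_AOA 1 (#|F| - 1) (#|F| + 2) A.
Proof.
have [al al_nsqr] := exists_not_sqr_add.
pose w := comb hinv_word (\row_i [:: al; 1; 1]`_i).
have w_dual : dual_word w by apply: dual_word_comb; exact: hinv_word_dual.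
have w_neq0 j : w j != 0.
  rewrite /w /comb /hinv_word !big_ord_recl big_ord0 !mxE /= !mul1r addr0.
  case: j => [x|[]] /=; rewrite ?mulr0 ?mulr1 ?add0r ?addr0 ?oner_eq0 //.
  apply: contra (al_nsqr x^-1).
  by rewrite ?expr1 addr_eq0 oppr_pchar2 // eq_sym addrC.
have w_comb_eq0 (c : 'I_1 -> hpoint) : injective c ->
    forall l, (forall k, comb (fun _ : 'I_1 => w) l (c k) = 0) -> l = 0.
  move=> _ l /(_ ord0); rewrite /comb big_ord_recl big_ord0 addr0 => /eqP.
  rewrite mulf_eq0 (negbTE (w_neq0 _)) orbF => /eqP l0.
  by apply/rowP => i; rewrite ord1 mxE.
have P0 : 0 \notin [set (1 : F)] by rewrite inE eq_sym oner_eq0.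
exists (code_aoa w_comb_eq0 P0 (cards1 1)).
exact: (code_aoa_linear (fun=> w_dual)).
Qed.

End Hyperoval.

Theorem theorem3p10 (F : finFieldType) (m : nat) :
  #|F| = (2 ^ m)%N -> (4 <= #|F|)%N ->
  (exists A : aoa_array F 'rV[F]_((#|F| - 1) - 1) (#|F| ^ (#|F| - 1)) (#|F| + 2),
     is_linear_AOA 1 (#|F| - 1) (#|F| + 2) A) /\
  (exists A : aoa_array F 'rV[F]_((#|F| - 1) - 3) (#|F| ^ (#|F| - 1)) (#|F| + 2),
     is_linear_AOA 3 (#|F| - 1) (#|F| + 2) A).
Proof.
move=> cardF F4.
have F2 : 2 \in [pchar F] by apply: (card_finPcharP cardF).
have F3 : (2 < #|F|)%N by apply: leq_trans F4.
by split; [exact: linear_AOA1_exists | exact: linear_AOA3_exists].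
Qed.
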